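(* Let $n\ge1$. If $\mathcal W$ is an $(n,T(n))$-weakly Ramsey non-P-point in standard position on $\omega^2$, then there is a set $P\in\mathcal W$ such that every $n$-element subset of $P$ realizes some $n$-type.
   Context: Ultrafilters are nonprincipal. A non-P-point in standard position is an ultrafilter $\mathcal W$ on $\omega^2$ such that $\pi_1:\omega^2\to\omega$ (first projection) is neither finite-to-one nor constant on any set in $\mathcal W$. $\mathcal W$ is $(n,t)$-weakly Ramsey if for every partition of $[\omega^2]^n$ into finitely many pieces there is $H\in\mathcal W$ with $[H]^n$ meeting at most $t$ pieces. An $n$-type is a linear pre-order of the formal symbols $x_1,\dots,x_n,y_1,\dots,y_n$ with $y_1<\dots<y_n$ strictly, each $x_i<y_i$ strictly, and any two distinct equivalent symbols both $x$'s. An $n$-element set $\{\langle a_1,b_1\rangle,\dots,\langle a_n,b_n\rangle\}\subseteq\omega^2$ with $b_1<\dots<b_n$ realizes $\tau$ if for all symbols $s,t$: $s\le_\tau t$ iff $v(s)\le v(t)$, with $v(x_i)=a_i,v(y_i)=b_i$; a set with two elements sharing a second coordinate realizes no type. $T(n)$ is the number of $n$-types. *)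

From mathcomp Require Import all_boot.
Set Implicit Arguments. Unset Strict Implicit. Unset Printing Implicit Defensive.

Definition pt := (nat * nat)%type.
Definition pset := pt -> Prop.

Definition is_ultrafilter (W : pset -> Prop) : Prop :=
  [/\ ~ W (fun _ => False),
      W (fun _ => True),
      (forall A B : pset, W A -> (forall p, A p -> B p) -> W B),
      (forall A B : pset, W A -> W B -> W (fun p => A p /\ B p)) &
      (forall A : pset, W A \/ W (fun p => ~ A p))].

(* Nonprincipal: contains no singleton, i.e. every co-singleton is in W. *)
Definition nonprincipal (W : pset -> Prop) : Prop :=
  forall q : pt, W (fun p => p <> q).

Definition pi1_finite_to_one (A : pset) : Prop :=
  forall a, exists m, forall b, A (a, b) -> b < m.

Definition pi1_constant (A : pset) : Prop :=
  exists a, forall p, A p -> p.1 = a.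

Definition non_P_point_std (W : pset -> Prop) : Prop :=
  forall A, W A -> ~ pi1_finite_to_one A /\ ~ pi1_constant A.

(* [omega^2]^n: an n-element subset is represented by any duplicate-free
   list of length n enumerating it; a finite partition of [omega^2]^n into
   k pieces is a colouring c of lists into 'I_k that is invariant under
   permutation (so it depends only on the underlying set). *)
Definition nsubset_of (n : nat) (H : pset) (l : seq pt) : Prop :=
  [/\ uniq l, size l = n & forall p, p \in l -> H p].

Definition weakly_Ramsey (n t : nat) (W : pset -> Prop) : Prop :=
  forall (k : nat) (c : seq pt -> 'I_k),
    (forall l1 l2, perm_eq l1 l2 -> c l1 = c l2) ->
    exists H : pset, W H /\
      exists S : {set 'I_k}, #|S| <= t /\
        forall l, nsubset_of n H l -> c l \in S.

(* Formal symbols: inl i = x_(i+1), inr i = y_(i+1). *)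
Definition sym (n : nat) := ('I_n + 'I_n)%type.
Definition is_x n (s : sym n) : bool := if s is inl _ then true else false.

(* A candidate pre-order is a boolean relation r, r (s,t) meaning s <= t. *)
Definition is_ntype (n : nat) (r : {ffun sym n * sym n -> bool}) : bool :=
  [&& [forall s, forall t, r (s, t) || r (t, s)],
      [forall s, forall t, forall u, r (s, t) ==> r (t, u) ==> r (s, u)],
      [forall i : 'I_n, forall j : 'I_n,
         (i < j) ==> (r (inr i, inr j) && ~~ r (inr j, inr i))],
      [forall i : 'I_n, r (inl i, inr i) && ~~ r (inr i, inl i)]
    & [forall s, forall t, ((s != t) && r (s, t) && r (t, s)) ==> (is_x s && is_x t)]].

Definition T (n : nat) : nat := #|[set r | is_ntype (n := n) r]|.

Definition symval n (l : seq pt) (s : sym n) : nat :=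
  match s with
  | inl i => (nth (0, 0) l i).1
  | inr i => (nth (0, 0) l i).2
  end.

(* The set enumerated by X realizes tau: it can be listed as
   (a_1,b_1),...,(a_n,b_n) with b_1 < ... < b_n and
   s <=_tau t iff v(s) <= v(t).  (A set with two elements sharing a
   second coordinate admits no such listing, hence realizes no type.) *)
Definition realizes n (r : {ffun sym n * sym n -> bool}) (X : seq pt) : Prop :=
  exists l : seq pt,
    [/\ perm_eq l X, sorted (fun p q : pt => p.2 < q.2) l &
        forall s t : sym n, r (s, t) = (symval l s <= symval l t)].

From mathcomp Require Import all_boot boolp.
Set Implicit Arguments. Unset Strict Implicit. Unset Printing Implicit Defensive.

(* Colour each n-element set by the n-type it realizes, with one extra colour
   for sets realizing none; this uses T(n)+1 colours.  Since W is a non-P-point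
   in standard position, every set in W has unboundedly many columns with
   infinite fibre, and inside such a set every n-type can be realized greedily,
   choosing the values of the symbols in increasing order.  A homogeneous set
   P in W therefore meets all T(n) type colours, so its at most T(n) colours
   leave no room for the extra one. *)

Local Notation rel_sym n := {ffun sym n * sym n -> bool}.

Section UltrafilterColumns.

Variable W : pset -> Prop.
Hypotheses (W_ultra : is_ultrafilter W) (W_nonP : non_P_point_std W).

Definition infinite_column (A : pset) (a : nat) : Prop :=
  forall m, exists2 b, m < b & A (a, b).

Lemma bounded_columns_notin m : ~ W (fun p : pt => p.1 <= m).
Proof.
case: W_ultra => _ _ W_sup W_cap W_split; elim: m => [|m IHm] W_le.
  by case: (W_nonP W_le) => _; apply; exists 0 => p; rewrite leqn0 => /eqP.
case: (W_split (fun p : pt => p.1 <= m)) => [//|W_gt].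
have /W_nonP [_] := W_cap _ _ W_le W_gt; apply; exists m.+1 => p [le_pm nle_pm].
by apply/eqP; rewrite eqn_leq le_pm ltnNge; apply/negP.
Qed.

Lemma infinite_columns_unbounded (A : pset) :
  W A -> forall m, exists2 a, m < a & infinite_column A a.
Proof.
case: (W_ultra) => _ _ W_sup W_cap W_split WA m.
apply: contrapT => no_col.
pose B (p : pt) := A p /\ m < p.1.
have notWB : ~ W B.
  move/W_nonP => [+ _]; apply => a.
  have [le_am|lt_ma] := leqP a m.
    by exists 0 => b [_ /=]; rewrite ltnNge le_am.
  have /existsNP[m' fin] : ~ infinite_column A a.
    by move=> col; apply: no_col; exists a.
  exists m'.+1 => b [Aab _]; rewrite ltnS leqNgt; apply/negP => lt_m'b.
  by apply: fin; exists b.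
case: (W_split B) => [//|WnB]; apply: (bounded_columns_notin (m := m)).
apply: W_sup (W_cap _ _ WA WnB) _ => p [Ap nBp].
by rewrite leqNgt; apply/negP => lt_mp; apply: nBp.
Qed.

End UltrafilterColumns.

Section NTypeRank.

Variables (n : nat) (r : rel_sym n).
Hypothesis r_ntype : is_ntype r.

Lemma ntype_total s t : r (s, t) || r (t, s).
Proof. by case/and5P: r_ntype => /forallP/(_ s)/forallP. Qed.

Lemma ntype_trans s t u : r (s, t) -> r (t, u) -> r (s, u).
Proof.
case/and5P: r_ntype => _ /forallP/(_ s)/forallP/(_ t)/forallP/(_ u) + _ _ _.
by move=> /implyP imp /imp/implyP.
Qed.

Lemma ntype_y_lt (i j : 'I_n) : i < j -> r (inr i, inr j) && ~~ r (inr j, inr i).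
Proof. by case/and5P: r_ntype => _ _ /forallP/(_ i)/forallP/(_ j)/implyP. Qed.

Lemma ntype_x_lt_y (i : 'I_n) : r (inl i, inr i) && ~~ r (inr i, inl i).
Proof. by case/and5P: r_ntype => _ _ _ /forallP. Qed.

Lemma ntype_tie_is_x s t : s != t -> r (s, t) -> r (t, s) -> is_x s && is_x t.
Proof.
case/and5P: r_ntype => _ _ _ _ /forallP/(_ s)/forallP/(_ t)/implyP tie st ts tsr.
by apply: tie; rewrite st ts tsr.
Qed.

Definition ntype_rank (s : sym n) : nat := #|[set t | r (t, s) && ~~ r (s, t)]|.

Lemma ntype_leE s t : r (s, t) = (ntype_rank s <= ntype_rank t).
Proof.
have below_sub u v : r (u, v) ->
    [set w | r (w, u) && ~~ r (u, w)] \subset [set w | r (w, v) && ~~ r (v, w)].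
  move=> uv; apply/subsetP => w; rewrite !inE => /andP[wu nuw].
  rewrite (ntype_trans wu uv); apply: contra nuw; exact: ntype_trans.
case st: (r (s, t)); first by rewrite subset_leq_card // below_sub.
have ts : r (t, s) by move: (ntype_total s t); rewrite st.
apply/esym/negbTE; rewrite -ltnNge; apply/proper_card/properP; split.
  exact: below_sub.
exists t; first by rewrite inE ts st.
by rewrite inE; move: (ntype_total t t); rewrite orbb => ->.
Qed.

End NTypeRank.

Section GreedySequence.

Variable next : seq nat -> nat -> nat.
Hypothesis next_gt : forall s k x, x \in s -> x < next s k.

Fixpoint greedy_prefix (k : nat) : seq nat :=
  if k is k'.+1 then rcons (greedy_prefix k') (next (greedy_prefix k') k') else [::].

Definition greedy (k : nat) : nat := next (greedy_prefix k) k.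

Lemma greedy_prefixE k : greedy_prefix k = mkseq greedy k.
Proof.
elim: k => [//|k IHk] /=.
by rewrite /mkseq -addn1 iotaD map_cat cats1 -/(mkseq _ _) -IHk.
Qed.

Lemma greedyE k : greedy k = next (mkseq greedy k) k.
Proof. by rewrite /greedy greedy_prefixE. Qed.

Lemma greedy_leE j k : (greedy j <= greedy k) = (j <= k).
Proof.
have greedy_lt i l : i < l -> greedy i < greedy l.
  by move=> lt_il; rewrite (greedyE l); apply/next_gt/map_f; rewrite mem_iota.
case: (ltngtP j k) => [/greedy_lt/ltnW|/greedy_lt/leq_gtF|->] //.
by rewrite leqnn.
Qed.

End GreedySequence.

Section Realization.

Variables (n : nat) (r : rel_sym n) (A : pset).
Variables (col : nat -> nat) (row : nat -> nat -> nat).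
Hypotheses (r_ntype : is_ntype r)
  (col_gt : forall m, m < col m) (col_infinite : forall m, infinite_column A (col m))
  (row_gt : forall a m, m < row a m)
  (row_in : forall a m, infinite_column A a -> A (a, row a m)).

(* The values are assigned rank level by rank level: the level of y_i gets a
   point above all earlier values in the column of x_i (whose level is lower);
   every other level is the level of some x's only and gets a fresh column. *)
Definition level_value (prev : seq nat) (k : nat) : nat :=
  let m := \max_(x <- prev) x in
  if [pick i : 'I_n | ntype_rank r (inr i) == k] is Some i
  then row (nth 0 prev (ntype_rank r (inl i))) m
  else col m.

Lemma level_value_gt prev k x : x \in prev -> x < level_value prev k.
Proof.
move=> prev_x; have le_x_max : x <= \max_(y <- prev) y.
  exact: (@leq_bigmax_seq _ _ xpredT id).
by rewrite /level_value; case: pickP => [i _|_]; apply: leq_ltn_trans le_x_max _.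
Qed.

Definition sym_value (s : sym n) : nat := greedy level_value (ntype_rank r s).

Lemma sym_value_leE s t : r (s, t) = (sym_value s <= sym_value t).
Proof. by rewrite /sym_value greedy_leE ?ntype_leE //; exact: level_value_gt. Qed.

Lemma sym_value_x_column (i : 'I_n) : infinite_column A (sym_value (inl i)).
Proof.
rewrite /sym_value greedyE /level_value; case: pickP => [j /eqP rank_j | _] //.
have yx : r (inr j, inl i) by rewrite ntype_leE // rank_j.
have xy : r (inl i, inr j) by rewrite ntype_leE // rank_j.
by have := ntype_tie_is_x r_ntype (isT : inr j != inl i) yx xy.
Qed.

Lemma sym_value_in (i : 'I_n) : A (sym_value (inl i), sym_value (inr i)).
Proof.
have rank_xy : ntype_rank r (inl i) < ntype_rank r (inr i).
  by rewrite ltnNge -ntype_leE //; case/andP: (ntype_x_lt_y r_ntype i).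
rewrite {2}/sym_value greedyE /level_value; case: pickP => [j /eqP rank_j | no_y];
  last by have := no_y i; rewrite eqxx.
have -> : j = i.
  have ij : r (inr i, inr j) by rewrite ntype_leE // rank_j.
  have ji : r (inr j, inr i) by rewrite ntype_leE // rank_j.
  case: (ltngtP j i) => [lt_ji|lt_ij|/val_inj //].
  - by case/andP: (ntype_y_lt r_ntype lt_ji); rewrite ij.
  - by case/andP: (ntype_y_lt r_ntype lt_ij); rewrite ji.
by rewrite nth_mkseq //; apply/row_in/sym_value_x_column.
Qed.

Definition realizing_list : seq pt :=
  [seq (sym_value (inl i), sym_value (inr i)) | i <- enum 'I_n].

Lemma symval_realizing_list s : symval realizing_list s = sym_value s.
Proof.
by case: s => i; rewrite /symval (nth_map i) ?size_enum_ord // nth_ord_enum.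
Qed.

Lemma realizing_list_sorted : sorted (fun p q : pt => p.2 < q.2) realizing_list.
Proof.
rewrite sorted_map; have : sorted ltn (map val (enum 'I_n)).
  by rewrite val_enum_ord iota_ltn_sorted.
rewrite sorted_map; apply: sub_sorted => i j /= lt_ij.
by rewrite ltnNge -sym_value_leE; case/andP: (ntype_y_lt r_ntype lt_ij).
Qed.

Lemma realizing_list_realizes : realizes r realizing_list.
Proof.
exists realizing_list; split=> [||s t]; rewrite ?realizing_list_sorted //.
by rewrite !symval_realizing_list sym_value_leE.
Qed.

Lemma realizing_list_nsubset : nsubset_of n A realizing_list.
Proof.
split.
- apply: sorted_uniq realizing_list_sorted => [p q u /= |p /=].
    exact: ltn_trans.
  by rewrite ltnn.
- by rewrite size_map size_enum_ord.
- by move=> p /mapP[i _ ->]; apply: sym_value_in.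
Qed.

End Realization.

Lemma ntype_realized_in n (r : rel_sym n) (A : pset) :
  is_ntype r -> (forall m, exists2 a, m < a & infinite_column A a) ->
  exists X, nsubset_of n A X /\ realizes r X.
Proof.
move=> r_ntype cols.
have [col col_gt col_infinite] :
    {col : nat -> nat | forall m, m < col m & forall m, infinite_column A (col m)}.
  by exists (fun m => projT1 (cid2 (cols m))) => m; case: cid2.
have row_ex a m : exists2 b, m < b & infinite_column A a -> A (a, b).
  case: (pselect (infinite_column A a)) => [/(_ m)[b lt_mb Aab] | no_col].
    by exists b.
  by exists m.+1 => // /no_col.
have [row row_gt row_in] : {row : nat -> nat -> nat | forall a m, m < row a m &
    forall a m, infinite_column A a -> A (a, row a m)}.
  by exists (fun a m => projT1 (cid2 (row_ex a m))) => a m; case: cid2.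
exists (realizing_list r col row); split.
  exact: realizing_list_nsubset.
exact: realizing_list_realizes.
Qed.

Lemma realizes_inj n (r1 r2 : rel_sym n) (X : seq pt) :
  realizes r1 X -> realizes r2 X -> r1 = r2.
Proof.
move=> [l1 [perm1 sorted1 r1E]] [l2 [perm2 sorted2 r2E]].
have l12 : l1 = l2.
  apply: (irr_sorted_eq _ _ sorted1 sorted2) => [p q u /=||].
  - exact: ltn_trans.
  - by move=> p /=; rewrite ltnn.
  - by apply: perm_mem; rewrite (perm_trans perm1) // perm_sym.
by apply/ffunP => -[s t]; rewrite r1E r2E l12.
Qed.

Section TypeColouring.

Variable n : nat.

Definition ntypes : seq (rel_sym n) := enum [set r : rel_sym n | is_ntype r].

Lemma size_ntypes : size ntypes = T n.
Proof. by rewrite -cardE. Qed.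

Lemma mem_ntypes r : (r \in ntypes) = is_ntype r.
Proof. by rewrite mem_enum inE. Qed.

(* Equals [T n] exactly when [X] realizes no type. *)
Definition type_index (X : seq pt) : nat := find (fun r => `[< realizes r X >]) ntypes.

Definition type_colour (X : seq pt) : 'I_(T n).+1 := inord (type_index X).

Lemma type_index_le X : type_index X <= T n.
Proof. by rewrite -size_ntypes find_size. Qed.

Lemma type_colourE X : nat_of_ord (type_colour X) = type_index X.
Proof. by rewrite inordK // ltnS type_index_le. Qed.

Lemma type_colour_perm X Y : perm_eq X Y -> type_colour X = type_colour Y.
Proof.
move=> pXY; rewrite /type_colour /type_index; congr inord.
apply: eq_find => r; apply: asbool_equiv_eq.
by split=> -[l [pl sorted_l rE]]; exists l; split=> //;
  rewrite (perm_trans pl) // perm_sym.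
Qed.

Lemma type_index_realized X :
  type_index X < T n -> exists2 r : rel_sym n, is_ntype r & realizes r X.
Proof.
rewrite -size_ntypes -has_find => /hasP[r ntypes_r /asboolP rX].
by exists r; rewrite -?mem_ntypes.
Qed.

Lemma type_index_nth r0 i X :
  i < T n -> realizes (nth r0 ntypes i) X -> type_index X = i.
Proof.
move=> lt_i rX; rewrite /type_index.
have -> : find (fun r => `[< realizes r X >]) ntypes = index (nth r0 ntypes i) ntypes.
  apply: eq_find => r; apply/asboolP/eqP => [rX'|->] //.
  exact: realizes_inj rX' rX.
by rewrite index_uniq ?enum_uniq ?size_ntypes.
Qed.

End TypeColouring.

Lemma type_colour_attained n (W : pset -> Prop) (P : pset) :
  is_ultrafilter W -> non_P_point_std W -> W P ->
  forall i : 'I_(T n).+1, i < T n -> exists2 X, nsubset_of n P X & type_colour n X = i.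
Proof.
move=> W_ultra W_nonP WP i lt_i.
pose r := nth [ffun _ => false] (ntypes n) i.
have r_ntype : is_ntype r by rewrite -mem_ntypes mem_nth ?size_ntypes.
have [X [PX rX]] := ntype_realized_in r_ntype (infinite_columns_unbounded W_ultra W_nonP WP).
by exists X => //; apply/val_inj; rewrite /= type_colourE (type_index_nth lt_i rX).
Qed.

Lemma ord_max_notin_small k (S : {set 'I_k.+1}) :
  [set~ ord_max] \subset S -> #|S| <= k -> ord_max \notin S.
Proof.
move=> below_max_S; apply: contraTN => max_in_S; rewrite -ltnNge.
have : [set: 'I_k.+1] \subset S.
  apply/subsetP => i _; have [->|i_ne_max] := eqVneq i ord_max => //.
  by apply: (subsetP below_max_S); rewrite !inE.
by move/subset_leq_card; rewrite cardsT card_ord.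
Qed.

Theorem mainTheorem4 (n : nat) (W : pset -> Prop) :
  1 <= n ->
  is_ultrafilter W -> nonprincipal W -> non_P_point_std W ->
  weakly_Ramsey n (T n) W ->
  exists P : pset, W P /\
    forall X : seq pt, nsubset_of n P X ->
      exists r : {ffun sym n * sym n -> bool}, is_ntype r /\ realizes r X.
Proof.
move=> _ W_ultra _ W_nonP W_ramsey.
have [P [WP [S [card_S colour_S]]]] := W_ramsey _ _ (@type_colour_perm n).
exists P; split=> // X PX.
have types_in_S : [set~ ord_max] \subset S.
  apply/subsetP => i; rewrite !inE => i_ne_max.
  have lt_i : i < T n by rewrite ltn_neqAle -ltnS ltn_ord andbT.
  by have [Y PY <-] := type_colour_attained W_ultra W_nonP WP lt_i; apply: colour_S.
have [|r] := @type_index_realized n X; last by exists r.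
rewrite ltn_neqAle type_index_le andbT -type_colourE.
apply: contraNneq (ord_max_notin_small types_in_S card_S) => max_colour.
have -> : ord_max = type_colour n X by apply: val_inj.
exact: colour_S.
Qed.
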